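(* Assume the Standing Setting below. Then for every $n\in\mathbb Z$ there exists a finite frame $\zeta_{(n,1)},\dots,\zeta_{(n,m_n)}$ for $\mathcal A_n\subseteq A_n$ such that $\sum_{j=1}^{m_n}\phi(\zeta_{(n,j)})\,\delta(\zeta_{(n,j)}^* )=0$.
   Context: Standing Setting: $A$ is a unital $C^*$-algebra with a strongly continuous action $\sigma$ of $S^1$; $A_n:=\{a:\sigma_\lambda(a)=\lambda^na\ \forall\lambda\}$, $P_0(a):=\frac1{2\pi}\int_0^{2\pi}\sigma_{e^{it}}(a)dt$. $\mathcal A\subseteq A$ is a norm-dense unital $*$-subalgebra with $P_0(\mathcal A)\subseteq\mathcal A$, generated as a $*$-algebra by $\mathcal A\cap A_1$; $\mathcal A_n:=\mathcal A\cap A_n$. $H_0$ is a separable Hilbert space, $\rho:A_0\to\mathcal B(H_0)$ an injective unital $*$-homomorphism, $D_0$ a selfadjoint operator on $H_0$ such that for every $a\in\mathcal A_0$, $\rho(a)$ preserves $\operatorname{Dom}(D_0)$ and $[D_0,\rho(a)]$ extends to a bounded operator $\delta_0(a)$. Moreover $H\supseteq H_0$ is a separable Hilbert space containing $H_0$ as a closed subspace, $\phi:A\to\mathcal B(H)$ a unital $*$-homomorphism and $\delta:\mathcal A\to\mathcal B(H)$ a linear map such that (1) $\delta(a)\xi=\delta_0(a)\xi$ and $\phi(a)\xi=\rho(a)\xi$ for $a\in\mathcal A_0$, $\xi\in H_0$; (2) there is $\mu>0$ with $\delta(ab)=\delta(a)\phi(b)+\mu^n\phi(a)\delta(b)$ whenever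 $a\in\mathcal A_n$, $b\in\mathcal A$; (3) there exist $\zeta^R_1,\dots,\zeta^R_k,\zeta^L_1,\dots,\zeta^L_m\in\mathcal A_1$ with $\sum_j\zeta_j^R(\zeta_j^R)^*=1=\sum_j(\zeta_j^L)^*\zeta_j^L$ and $\sum_j\phi(\zeta^R_j)\delta((\zeta^R_j)^* )=0=\sum_j\phi(\zeta_j^L)^*\delta(\zeta_j^L)$. A finite frame for $\mathcal A_n$ is a finite family $\zeta_1,\dots,\zeta_p\in\mathcal A_n$ with $\sum_j\zeta_j\zeta_j^*x=x$ for all $x\in\mathcal A_n$. *)

From HB Require Import structures.
From mathcomp Require Import all_boot all_order all_algebra.
From mathcomp Require Import all_classical all_reals all_analysis.
From mathcomp Require Import complex.
Set Implicit Arguments. Unset Strict Implicit. Unset Printing Implicit Defensive.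
Import Order.TTheory GRing.Theory Num.Theory.
Import numFieldNormedType.Exports.
Local Open Scope ring_scope.
Local Open Scope classical_set_scope.
Local Open Scope complex_scope.

Section StandingDefs.
Variable R : realType.
Local Notation C := R[i].

Definition expi (t : R) : C := cos t +i* sin t.

Definition circle : set C := [set z | `|z| = 1].

Definition is_subspace (V : lmodType C) (S : set V) : Prop :=
  S 0 /\ forall (c : C) x y, S x -> S y -> S (c *: x + y).

Definition is_linear_on (V W : lmodType C) (S : set V) (f : V -> W) : Prop :=
  forall (c : C) x y, S x -> S y -> f (c *: x + y) = c *: f x + f y.

Definition is_bounded_op_on (H : normedModType C) (S : set H) (T : H -> H) : Prop :=
  [/\ forall x, S x -> S (T x),
      is_linear_on S T &
      (exists M : C, forall x, S x -> `|T x| <= M * `|x|) ].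

Definition separable_in (H : normedModType C) (S : set H) : Prop :=
  exists D : set H, [/\ D `<=` S, countable D &
    (forall x, S x -> forall e : C, 0 < e -> exists2 d, D d & `|x - d| < e)].

Record is_cstar_algebra (A : completeNormedModType C)
    (mul : A -> A -> A) (one : A) (star : A -> A) : Prop := {
  cs_mulDl : forall (c : C) a b x, mul (c *: a + b) x = c *: mul a x + mul b x;
  cs_mulDr : forall (c : C) a b x, mul x (c *: a + b) = c *: mul x a + mul x b;
  cs_mulA : forall a b d, mul a (mul b d) = mul (mul a b) d;
  cs_mul1l : forall a, mul one a = a;
  cs_mul1r : forall a, mul a one = a;
  cs_starD : forall (c : C) a b, star (c *: a + b) = Num.conj c *: star a + star b;
  cs_starK : forall a, star (star a) = a;
  cs_starM : forall a b, star (mul a b) = mul (star b) (star a);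
  cs_norm_mul : forall a b, `|mul a b| <= `|a| * `|b|;
  cs_cstar : forall a, `|mul (star a) a| = `|a| ^+ 2 }.

Definition is_star_subalg (A : lmodType C) (mul : A -> A -> A) (one : A)
    (star : A -> A) (S : set A) : Prop :=
  [/\ S one, forall (c : C) x y, S x -> S y -> S (c *: x + y),
      (forall x y, S x -> S y -> S (mul x y)) & (forall x, S x -> S (star x))].

Definition generated_by (A : lmodType C) (mul : A -> A -> A) (one : A)
    (star : A -> A) (G S : set A) : Prop :=
  forall B, is_star_subalg mul one star B -> G `<=` B -> S `<=` B.

Record is_S1_action (A : completeNormedModType C) (mul : A -> A -> A) (one : A)
    (star : A -> A) (sigma : C -> A -> A) : Prop := {
  act_lin : forall l, circle l -> forall (c : C) a b,
      sigma l (c *: a + b) = c *: sigma l a + sigma l b;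
  act_mul : forall l, circle l -> forall a b,
      sigma l (mul a b) = mul (sigma l a) (sigma l b);
  act_star : forall l, circle l -> forall a, sigma l (star a) = star (sigma l a);
  act_one : forall l, circle l -> sigma l one = one;
  act_id : forall a, sigma 1 a = a;
  act_comp : forall l m, circle l -> circle m -> forall a,
      sigma (l * m) a = sigma l (sigma m a);
  act_cont : forall a l0, circle l0 -> forall e : C, 0 < e ->
      exists2 d : C, 0 < d & forall l, circle l -> `|l - l0| < d ->
        `|sigma l a - sigma l0 a| < e }.

Definition spec (A : lmodType C) (sigma : C -> A -> A) (n : int) : set A :=
  [set a | forall l, circle l -> sigma l a = l ^ n *: a].

(* P_0(a) = 1/(2pi) \int_0^{2pi} sigma_{e^{it}}(a) dt, as the limit of
   the Riemann sums over uniform partitions *)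
Definition P0 (A : completeNormedModType C) (sigma : C -> A -> A) (a : A) : A :=
  lim ((fun N : nat => (N.+1%:R : C)^-1 *:
          \sum_(k < N.+1) sigma (expi (2 * pi * k%:R / N.+1%:R)) a) @ \oo).

Record is_hilbert (H : completeNormedModType C) (ip : H -> H -> C) : Prop := {
  ip_linl : forall (c : C) x y z, ip (c *: x + y) z = c * ip x z + ip y z;
  ip_conj : forall x y, ip y x = Num.conj (ip x y);
  ip_norm : forall x, ip x x = `|x| ^+ 2 }.

Record is_selfadjoint_on (H : completeNormedModType C) (ip : H -> H -> C)
    (H0 Dom : set H) (D : H -> H) : Prop := {
  sa_dom_sub : Dom `<=` H0;
  sa_dom_subspace : is_subspace Dom;
  sa_maps : forall x, Dom x -> H0 (D x);
  sa_lin : is_linear_on Dom D;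
  sa_dense : H0 `<=` closure Dom;
  sa_sym : forall x y, Dom x -> Dom y -> ip (D x) y = ip x (D y);
  sa_adj : forall y, H0 y ->
      (exists2 z, H0 z & forall x, Dom x -> ip (D x) y = ip x z) -> Dom y }.

Definition is_finite_frame (A : lmodType C) (mul : A -> A -> A) (star : A -> A)
    (S : set A) (s : seq A) : Prop :=
  (forall z, z \in s -> S z) /\
  forall x, S x -> \sum_(z <- s) mul (mul z (star z)) x = x.

Record standing_setting
    (A : completeNormedModType C) (mul : A -> A -> A) (one : A) (star : A -> A)
    (sigma : C -> A -> A) (Acal : set A)
    (H : completeNormedModType C) (ip : H -> H -> C) (H0 : set H)
    (rho : A -> H -> H) (Dom : set H) (D0 : H -> H) (delta0 : A -> H -> H)
    (phi : A -> H -> H) (delta : A -> H -> H) : Prop := {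
  ss_cstar : is_cstar_algebra mul one star;
  ss_action : is_S1_action mul one star sigma;
  ss_sub : is_star_subalg mul one star Acal;
  ss_dense : closure Acal = setT;
  ss_P0 : forall a, Acal a -> Acal (P0 sigma a);
  ss_gen : generated_by mul one star (Acal `&` spec sigma 1) Acal;
  ss_hilbert : is_hilbert ip;
  ss_Hsep : separable_in (@setT H);
  ss_H0sub : is_subspace H0;
  ss_H0closed : closed H0;
  ss_H0sep : separable_in H0;
  ss_rho_bdd : forall a, spec sigma 0 a -> is_bounded_op_on H0 (rho a);
  ss_rho_one : forall x, H0 x -> rho one x = x;
  ss_rho_lin : forall (c : C) a b x, spec sigma 0 a -> spec sigma 0 b -> H0 x ->
      rho (c *: a + b) x = c *: rho a x + rho b x;
  ss_rho_mul : forall a b x, spec sigma 0 a -> spec sigma 0 b -> H0 x ->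
      rho (mul a b) x = rho a (rho b x);
  ss_rho_star : forall a x y, spec sigma 0 a -> H0 x -> H0 y ->
      ip (rho (star a) x) y = ip x (rho a y);
  ss_rho_inj : forall a b, spec sigma 0 a -> spec sigma 0 b ->
      (forall x, H0 x -> rho a x = rho b x) -> a = b;
  ss_D0 : is_selfadjoint_on ip H0 Dom D0;
  ss_comm_dom : forall a, (Acal `&` spec sigma 0) a ->
      forall x, Dom x -> Dom (rho a x);
  ss_delta0_bdd : forall a, (Acal `&` spec sigma 0) a ->
      is_bounded_op_on H0 (delta0 a);
  ss_delta0_comm : forall a, (Acal `&` spec sigma 0) a ->
      forall x, Dom x -> delta0 a x = D0 (rho a x) - rho a (D0 x);
  ss_phi_bdd : forall a, is_bounded_op_on setT (phi a);
  ss_phi_one : forall x, phi one x = x;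
  ss_phi_lin : forall (c : C) a b x, phi (c *: a + b) x = c *: phi a x + phi b x;
  ss_phi_mul : forall a b x, phi (mul a b) x = phi a (phi b x);
  ss_phi_star : forall a x y, ip (phi (star a) x) y = ip x (phi a y);
  ss_delta_bdd : forall a, Acal a -> is_bounded_op_on setT (delta a);
  ss_delta_lin : forall (c : C) a b x, Acal a -> Acal b ->
      delta (c *: a + b) x = c *: delta a x + delta b x;
  ss_cond1 : forall a x, (Acal `&` spec sigma 0) a -> H0 x ->
      delta a x = delta0 a x /\ phi a x = rho a x;
  ss_cond2 : exists2 mu : R, 0 < mu &
      forall (n : int) a b, (Acal `&` spec sigma n) a -> Acal b -> forall x,
        delta (mul a b) x = delta a (phi b x) + (mu%:C) ^ n *: phi a (delta b x);
  (* (3); phi(zeta)^* is written phi(zeta^* ) since phi is a *-homomorphism *)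
  ss_cond3 : exists zR zL : seq A,
      [/\ (forall z, z \in zR -> (Acal `&` spec sigma 1) z),
          \sum_(z <- zR) mul z (star z) = one &
          (forall x, \sum_(z <- zR) phi z (delta (star z) x) = 0)] /\
      [/\ (forall z, z \in zL -> (Acal `&` spec sigma 1) z),
          \sum_(z <- zL) mul (star z) z = one &
          (forall x, \sum_(z <- zL) phi (star z) (delta z x) = 0)] }.

End StandingDefs.

From HB Require Import structures.
From mathcomp Require Import all_boot all_order all_algebra.
From mathcomp Require Import all_classical all_reals all_analysis.
From mathcomp Require Import complex.
Set Implicit Arguments. Unset Strict Implicit. Unset Printing Implicit Defensive.
Import Order.TTheory GRing.Theory Num.Theory.
Import numFieldNormedType.Exports.
Local Open Scope ring_scope.
Local Open Scope classical_set_scope.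
Local Open Scope complex_scope.

(* If [s] and [t] are frames of degrees [n] and [k] with [sum z z^* = 1] and
   [sum phi(z) delta(z^* ) = 0], then so are the products [w u] ([w] in [s],
   [u] in [t]), in degree [n + k]: the twisted Leibniz rule splits
   [delta((w u)^* ) = delta(u^* w^* )] into a term killed by the balance of [t]
   and [mu^(-k)] times the balance term of [s].  Taking products of copies of
   the frame [zeta^R] (degree 1) or of [(zeta^L)^*] (degree -1), together with
   their product in degree 0, gives every degree. *)

Section LinearOnT.
Variables (R : realType) (V W : lmodType R[i]) (f : V -> W).
Hypothesis f_lin : is_linear_on setT f.

Lemma linear_onT0 : f 0 = 0.
Proof.
have := @f_lin 1 0 0 I I; rewrite !scale1r addr0 => h.
by apply: (addrI (f 0)); rewrite addr0 -h.
Qed.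

Lemma linear_onTD x y : f (x + y) = f x + f y.
Proof. by rewrite -[x]scale1r f_lin // !scale1r. Qed.

Lemma linear_onTZ (c : R[i]) x : f (c *: x) = c *: f x.
Proof. by rewrite -[c *: x]addr0 f_lin // linear_onT0 addr0. Qed.

Lemma linear_onT_sum (I : Type) (r : seq I) (F : I -> V) :
  f (\sum_(i <- r) F i) = \sum_(i <- r) f (F i).
Proof.
elim: r => [|i r IHr]; first by rewrite !big_nil linear_onT0.
by rewrite !big_cons linear_onTD IHr.
Qed.

End LinearOnT.

Section CStarAlgebra.
Variables (R : realType) (A : completeNormedModType R[i]).
Variables (mul : A -> A -> A) (one : A) (star : A -> A).
Hypothesis hA : is_cstar_algebra mul one star.

Lemma mul_linear_onTl x : is_linear_on setT (mul^~ x).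
Proof. by move=> c a b _ _; exact: (cs_mulDl hA). Qed.

Lemma mul_linear_onTr x : is_linear_on setT (mul x).
Proof. by move=> c a b _ _; exact: (cs_mulDr hA). Qed.

Lemma mulZl (c : R[i]) a x : mul (c *: a) x = c *: mul a x.
Proof. exact: (linear_onTZ (mul_linear_onTl x)). Qed.

Lemma mulZr (c : R[i]) a x : mul x (c *: a) = c *: mul x a.
Proof. exact: (linear_onTZ (mul_linear_onTr x)). Qed.

Lemma mul_suml (I : Type) (r : seq I) (F : I -> A) x :
  mul (\sum_(i <- r) F i) x = \sum_(i <- r) mul (F i) x.
Proof. exact: (linear_onT_sum (mul_linear_onTl x)). Qed.

Lemma mul_sumr (I : Type) (r : seq I) (F : I -> A) x :
  mul x (\sum_(i <- r) F i) = \sum_(i <- r) mul x (F i).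
Proof. exact: (linear_onT_sum (mul_linear_onTr x)). Qed.

Lemma starZ (c : R[i]) a : star (c *: a) = Num.conj c *: star a.
Proof.
have star0 : star 0 = 0.
  have := cs_starD hA 1 0 0; rewrite conjC1 !scale1r addr0 => h.
  by apply: (addrI (star 0)); rewrite addr0 -h.
by have := cs_starD hA c a 0; rewrite !addr0 star0 addr0.
Qed.

End CStarAlgebra.

Lemma circle_conj (R : realType) (l : R[i]) : circle l -> Num.conj l = l^-1.
Proof. by move=> hl; rewrite invC_norm hl expr1n invr1 mul1r. Qed.

Lemma circle_neq0 (R : realType) (l : R[i]) : circle l -> l != 0.
Proof. by move=> hl; rewrite -normr_eq0 hl oner_eq0. Qed.

Section SpectralSubspaces.
Variables (R : realType) (A : completeNormedModType R[i]).
Variables (mul : A -> A -> A) (one : A) (star : A -> A) (sigma : R[i] -> A -> A).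
Hypotheses (hA : is_cstar_algebra mul one star)
  (hsigma : is_S1_action mul one star sigma).

Lemma spec_mul n k a b :
  spec sigma n a -> spec sigma k b -> spec sigma (n + k) (mul a b).
Proof.
move=> ha hb l hl; rewrite (act_mul hsigma) // ha // hb //.
by rewrite (mulZl hA) (mulZr hA) scalerA expfzDr ?circle_neq0.
Qed.

Lemma spec_star n a : spec sigma n a -> spec sigma (- n) (star a).
Proof.
move=> ha l hl; rewrite (act_star hsigma) // ha // (starZ hA).
by rewrite -exprz_inv -(circle_conj hl) rmorphXz // unitfE circle_neq0.
Qed.

End SpectralSubspaces.

Section BalancedFrames.
Variables (R : realType) (A : completeNormedModType R[i]).
Variables (mul : A -> A -> A) (one : A) (star : A -> A) (sigma : R[i] -> A -> A).
Variables (Acal : set A) (H : completeNormedModType R[i]) (phi delta : A -> H -> H).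
Variable mu : R.
Hypotheses (hA : is_cstar_algebra mul one star)
  (hsigma : is_S1_action mul one star sigma).
Hypotheses (Acal_mul : forall a b, Acal a -> Acal b -> Acal (mul a b))
  (Acal_star : forall a, Acal a -> Acal (star a)).
Hypotheses (phi_linl : forall x, is_linear_on setT (phi^~ x))
  (phi_linr : forall a, is_linear_on setT (phi a))
  (phi_one : forall x, phi one x = x)
  (phi_mul : forall a b x, phi (mul a b) x = phi a (phi b x)).
Hypothesis delta_leibniz : forall n a b, (Acal `&` spec sigma n) a -> Acal b ->
  forall x, delta (mul a b) x = delta a (phi b x) + (mu%:C) ^ n *: phi a (delta b x).

Definition balanced_frame (n : int) (s : seq A) : Prop :=
  [/\ forall z, z \in s -> (Acal `&` spec sigma n) z,
      \sum_(z <- s) mul z (star z) = one &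
      forall x, \sum_(z <- s) phi z (delta (star z) x) = 0].

Lemma balanced_frame_finite_frame n s :
  balanced_frame n s -> is_finite_frame mul star (Acal `&` spec sigma n) s.
Proof.
by case=> s_in s_one _; split=> // x _; rewrite -(mul_suml hA) s_one (cs_mul1l hA).
Qed.

Lemma delta_star_mul k w u x : Acal w -> (Acal `&` spec sigma k) u ->
  delta (star (mul w u)) x =
  delta (star u) (phi (star w) x) + (mu%:C) ^ (- k) *: phi (star u) (delta (star w) x).
Proof.
move=> Aw [Au ku].
rewrite (cs_starM hA) (delta_leibniz (n := - k)) //; last exact: Acal_star.
by split; [exact: Acal_star | exact: (spec_star hA hsigma)].
Qed.

Lemma balanced_frame_mul n k s t : balanced_frame n s -> balanced_frame k t ->
  balanced_frame (n + k) [seq mul w u | w <- s, u <- t].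
Proof.
move=> [s_in s_one s_bal] [t_in t_one t_bal]; split.
- move=> _ /allpairsP [[w u] [/= /s_in [Aw nw] /t_in [Au ku] ->]].
  by split; [exact: Acal_mul | exact: (spec_mul hA)].
- rewrite big_allpairs_dep /= -[RHS]s_one; apply: eq_bigr => w _.
  under eq_bigr => u _ do rewrite (cs_starM hA) !(cs_mulA hA) -(cs_mulA hA w).
  by rewrite -(mul_suml hA) -(mul_sumr hA) t_one (cs_mul1r hA).
- move=> x; rewrite big_allpairs_dep /=.
  have row w : w \in s -> \sum_(u <- t) phi (mul w u) (delta (star (mul w u)) x)
      = (mu%:C) ^ (- k) *: phi w (delta (star w) x).
    move=> /s_in [Aw _]; rewrite (eq_big_seq _ (fun u ut =>
      congr1 (phi (mul w u)) (delta_star_mul x Aw (t_in u ut)))).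
    under eq_bigr => u _ do rewrite phi_mul.
    rewrite -(linear_onT_sum (phi_linr w)).
    under eq_bigr => u _ do
      rewrite (linear_onTD (phi_linr u)) (linear_onTZ (phi_linr u)) -phi_mul.
    rewrite big_split /= t_bal add0r -scaler_sumr.
    by rewrite -(linear_onT_sum (phi_linl _)) t_one phi_one (linear_onTZ (phi_linr w)).
  by rewrite (eq_big_seq _ row) -scaler_sumr s_bal scaler0.
Qed.

Lemma balanced_frame_map_star n s :
  (forall z, z \in s -> (Acal `&` spec sigma n) z) ->
  \sum_(z <- s) mul (star z) z = one ->
  (forall x, \sum_(z <- s) phi (star z) (delta z x) = 0) ->
  balanced_frame (- n) (map star s).
Proof.
move=> s_in s_one s_bal; split=> [||x]; rewrite ?big_map.
- move=> _ /mapP [z /s_in [Az nz] ->].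
  by split; [exact: Acal_star | exact: (spec_star hA hsigma)].
- by under eq_bigr => z _ do rewrite (cs_starK hA).
- by under eq_bigr => z _ do rewrite (cs_starK hA).
Qed.

Lemma balanced_frame_mulrn s0 : balanced_frame 0 s0 ->
  forall n s, balanced_frame n s -> forall m : nat, exists t, balanced_frame (n *+ m) t.
Proof.
move=> f0 n s fn; elim=> [|m [t ft]]; first by exists s0.
by exists [seq mul w u | w <- s, u <- t]; rewrite mulrS; exact: balanced_frame_mul.
Qed.

End BalancedFrames.

Theorem lemma7p6 (R : realType)
    (A : completeNormedModType R[i]) (mul : A -> A -> A) (one : A) (star : A -> A)
    (sigma : R[i] -> A -> A) (Acal : set A)
    (H : completeNormedModType R[i]) (ip : H -> H -> R[i]) (H0 : set H)
    (rho : A -> H -> H) (Dom : set H) (D0 : H -> H) (delta0 : A -> H -> H)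
    (phi : A -> H -> H) (delta : A -> H -> H)
    (hS : standing_setting mul one star sigma Acal ip H0 rho Dom D0 delta0 phi delta) :
  forall n : int, exists s : seq A,
    is_finite_frame mul star (Acal `&` spec sigma n) s /\
    forall x : H, \sum_(z <- s) phi z (delta (star z) x) = 0.
Proof.
have hA := ss_cstar hS; have hsigma := ss_action hS.
have [_ _ Acal_mul Acal_star] := ss_sub hS.
have phi_linl x : is_linear_on setT (phi^~ x).
  by move=> c a b _ _; exact: (ss_phi_lin hS).
have phi_linr a : is_linear_on setT (phi a) by have [] := ss_phi_bdd hS a.
have [mu _ leibniz] := ss_cond2 hS.
have [zR [zL [fR [zL_in zL_one zL_bal]]]] := ss_cond3 hS.
have fL := balanced_frame_map_star hA hsigma Acal_star zL_in zL_one zL_bal.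
have f0 := balanced_frame_mul hA hsigma Acal_mul Acal_star phi_linl phi_linr
  (ss_phi_one hS) (ss_phi_mul hS) leibniz fR fL.
rewrite addrN in f0.
have mulrn := balanced_frame_mulrn hA hsigma Acal_mul Acal_star phi_linl phi_linr
  (ss_phi_one hS) (ss_phi_mul hS) leibniz f0.
move=> n; suff [s fs] : exists s, balanced_frame mul one star sigma Acal phi delta n s.
  by exists s; split; [exact: (balanced_frame_finite_frame hA fs) | case: fs].
case: n => m; first by rewrite -natz; exact: mulrn fR m.
by rewrite NegzE -natz -mulNrn; exact: mulrn fL m.+1.
Qed.
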